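(* Let $\mathbb{R}^n$ and $\mathbb{R}^m$ be equipped with arbitrary norms $\|\cdot\|$, with dual norms $\|\cdot\|_*$, and let $g:\mathbb{R}^n\to\mathbb{R}^m$, $y\in\mathbb{R}^m$, $\rho>0$, $L\ge 0$, $\mu>0$. Let $B=\{x\in\mathbb{R}^n:\|x\|\le\rho\}$. Assume: (A) $g(0)=0$, $g$ is differentiable in $B$, and $\|g'(x^a)-g'(x^b)\|\le L\|x^a-x^b\|$ for all $x^a,x^b\in B$; (B) for all $x\in B$ and all $h\in\mathbb{R}^m$, $\|g'(x)^T h\|_*\ge \mu\|h\|_*$; (C) $\|y\|<\mu\rho$. Then there exists a solution $x^*$ of $g(x)=y$ with $\|x^*\|\le \frac{\|y\|}{\mu}$.
   Context: For a vector $c$, the dual norm is $\|c\|_*=\sup_{\|x\|=1}(c,x)$. The norm of the matrix $g'(x)$ (a linear map $\mathbb{R}^n\to\mathbb{R}^m$) is the operator norm subordinate to the chosen vector norms on $\mathbb{R}^n$ and $\mathbb{R}^m$. *)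

From HB Require Import structures.
From mathcomp Require Import all_boot all_order all_algebra.
From mathcomp Require Import all_classical all_reals all_analysis.
Set Implicit Arguments. Unset Strict Implicit. Unset Printing Implicit Defensive.
Import Order.TTheory GRing.Theory Num.Theory.
Import numFieldNormedType.Exports.
Local Open Scope classical_set_scope.
Local Open Scope ring_scope.

Definition is_norm (R : realType) (n : nat) (N : 'rV[R]_n -> R) : Prop :=
  [/\ forall x, 0 <= N x,
      forall x, N x = 0 -> x = 0,
      forall (a : R) x, N (a *: x) = `|a| * N x
    & forall x y, N (x + y) <= N x + N y].

Definition dotv (R : realType) (n : nat) (c x : 'rV[R]_n) : R :=
  \sum_(i < n) c ord0 i * x ord0 i.

Definition dualnorm (R : realType) (n : nat) (N : 'rV[R]_n -> R) (c : 'rV[R]_n) : R :=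
  sup [set dotv c x | x in [set x | N x = 1]].

Definition opnorm (R : realType) (n m : nat) (Nn : 'rV[R]_n -> R)
    (Nm : 'rV[R]_m -> R) (A : 'M[R]_(n, m)) : R :=
  sup [set Nm (x *m A) | x in [set x | Nn x = 1]].

(* Jacobian matrix of g at x, in row-vector convention:
   'd g x v = v *m jac g x *)
Definition jac (R : realType) (n m : nat) (g : 'rV[R]_n -> 'rV[R]_m)
    (x : 'rV[R]_n) : 'M[R]_(n, m) :=
  lin1_mx ('d g x).

(* For 0 < c < mu with ||y|| < c rho, minimise ||g x - y|| + c ||x|| over
   the ball B.  Comparing with x = 0 gives c ||x|| <= ||y|| < c rho, so the
   minimiser x is interior.  If g x <> y, hypothesis (B) yields a Newton
   direction d with g'(x) d = y - g x and mu ||d|| <= ||g x - y||, and moving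
   from x along d decreases the objective at rate ||g x - y|| - c ||d|| > 0.
   Such a d exists because a matrix J with mu ||h||_* <= ||J^T h||_* maps the
   ball of radius ||z|| / mu onto a set containing z: otherwise the Euclidean
   projection of z onto that image, tested against a vector nearly attaining
   a dual norm, contradicts the bound.  The sharp estimate ||x|| <= ||y|| / mu
   comes from minimising ||g x - y|| + max(0, mu ||x|| - ||y||) over B: a
   positive minimum would be beaten by the solution built for some c close
   enough to mu. *)

From mathcomp Require Import all_boot all_order all_algebra.
From mathcomp Require Import all_classical all_reals all_analysis.
From mathcomp Require Import ring lra.

Import Order.TTheory GRing.Theory Num.Theory.
Import numFieldNormedType.Exports.
Local Open Scope classical_set_scope.
Local Open Scope ring_scope.

Section Seminorm.
Context {R : realType} {n : nat}.
Variable N : 'rV[R]_n -> R.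
Hypotheses (ND : forall x y, N (x + y) <= N x + N y)
  (NZ : forall a x, N (a *: x) = `|a| * N x).

Lemma seminorm0 : N 0 = 0.
Proof. by rewrite -(scale0r (0 : 'rV[R]_n)) NZ normr0 mul0r. Qed.

Lemma seminorm_ge0 x : 0 <= N x.
Proof.
have := ND x (-x); rewrite subrr seminorm0 -scaleN1r NZ normrN1 mul1r; lra.
Qed.

Lemma seminorm_le_mx_norm : exists2 C, 0 < C & forall x, N x <= C * `|x|.
Proof.
exists (1 + \sum_j N 'e_j).
  by rewrite ltr_pwDl // sumr_ge0 // => j _; exact: seminorm_ge0.
move=> x; rewrite mulrDl mul1r big_distrl /= {1}(row_sum_delta x).
apply: le_trans (ler_wpDl (normr_ge0 _) (lexx _)).
elim/big_ind2 : _ => [|u1 u2 v1 v2 le1 le2|j _]; first by rewrite seminorm0.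
  by apply: le_trans (ND _ _) (lerD le1 le2).
rewrite NZ [leRHS]mulrC ler_wpM2r ?seminorm_ge0 //.
have -> : `|x| = mx_norm x by [].
by rewrite mx_normrE; apply/bigmax_geP; right; exists (ord0, j).
Qed.

End Seminorm.

Lemma rV_linear_continuous {R : realType} {n : nat} {V : normedModType R}
  (f : {linear 'rV[R]_n -> V}) : continuous f.
Proof.
have fD x y : `|f (x + y)| <= `|f x| + `|f y| by rewrite linearD ler_normD.
have fZ a x : `|f (a *: x)| = `|a| * `|f x| by rewrite linearZ normrZ.
have [C _ fC] := seminorm_le_mx_norm _ fD fZ.
apply: bounded_linear_continuous; apply/linear_boundedP.
near=> r => x; by apply: le_trans (fC x) _; rewrite ler_wpM2r.
Unshelve. all: by end_near. Qed.

Section Norm.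
Context {R : realType} {n : nat} {N : 'rV[R]_n -> R}.
Hypothesis normN : is_norm N.

Lemma is_norm_ge0 x : 0 <= N x. Proof. by case: normN. Qed.
Lemma is_norm_eq0 {x} : N x = 0 -> x = 0.
Proof. by case: normN => _ + _ _; apply. Qed.
Lemma is_normZ a x : N (a *: x) = `|a| * N x. Proof. by case: normN. Qed.
Lemma is_normD x y : N (x + y) <= N x + N y. Proof. by case: normN. Qed.

Lemma is_norm0 : N 0 = 0. Proof. exact: seminorm0 _ is_normZ. Qed.

Lemma is_normN x : N (- x) = N x.
Proof. by rewrite -scaleN1r is_normZ normrN1 mul1r. Qed.

Lemma is_norm_gt0 {x} : x != 0 -> 0 < N x.
Proof.
move=> x0; rewrite lt_neqAle is_norm_ge0 andbT eq_sym.
by apply: contra x0 => /eqP/is_norm_eq0->.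
Qed.

Lemma is_norm_le_mx_norm : exists2 C, 0 < C & forall x, N x <= C * `|x|.
Proof. exact: seminorm_le_mx_norm _ is_normD is_normZ. Qed.

Lemma is_norm_continuous : continuous N.
Proof.
have [C C0 NC] := is_norm_le_mx_norm.
move=> x; apply/(@cvgrPdist_lt _ _ _ _ (nbhs_filter x)) => e e0.
have := @nbhsx_ballx _ _ x _ (divr_gt0 e0 C0); rewrite -ball_normE.
apply: filterS => z /= xz.
have dist_le : `|N x - N z| <= N (x - z).
  rewrite ler_norml; apply/andP; split.
    by have := is_normD x (z - x); rewrite addrC subrK -opprB is_normN; lra.
  by have := is_normD (x - z) z; rewrite subrK; lra.
apply: le_lt_trans dist_le (le_lt_trans (NC _) _).
by rewrite mulrC -ltr_pdivlMr.
Qed.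

Lemma mx_norm_le_is_norm : exists2 c, 0 < c & forall x, c * `|x| <= N x.
Proof.
pose S := [set x : 'rV[R]_n | `|x| = 1].
have normalize x : x != 0 -> S (`|x|^-1 *: x).
  by move=> x0; rewrite /S /= normrZ normfV normr_id mulVf // normr_eq0.
have [S0|S0] := pselect (S !=set0); last first.
  exists 1 => // x; have [->|x0] := eqVneq x 0.
    by rewrite normr0 mulr0 is_norm0.
  by exfalso; apply: S0; exists (`|x|^-1 *: x); exact: normalize.
have cS : compact S.
  apply: bounded_closed_compact; last first.
    exact: (continuous_closedP _).1 (@norm_continuous _ _) _ (@closed_eq _ 1).
  by exists 1; split => // M M1 x /= ->; exact: ltW.
have [u /set_mem Su umin] :=
  EVT_min_rV S0 cS (continuous_subspaceT is_norm_continuous).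
have u0 : u != 0.
  apply/eqP => u0; move: Su; rewrite /S /= u0 normr0 => /esym/eqP.
  by rewrite oner_eq0.
exists (N u); first exact: is_norm_gt0.
move=> x; have [->|x0] := eqVneq x 0; first by rewrite normr0 mulr0 is_norm0.
have := umin _ (mem_set (normalize x x0)).
by rewrite is_normZ normfV normr_id ler_pdivlMl ?normr_gt0 // mulrC.
Qed.

Lemma compact_is_norm_ball r : compact [set x | N x <= r].
Proof.
have [c c0 cN] := mx_norm_le_is_norm.
apply: bounded_closed_compact.
  exists (r / c); split; first exact: num_real.
  move=> M rcM x /= Nx; apply: ltW; apply: le_lt_trans rcM.
  by rewrite ler_pdivlMr // mulrC (le_trans (cN x)).
exact: (continuous_closedP _).1 is_norm_continuous _ (@closed_le _ r).
Qed.

Lemma is_norm_ball_convex {r a b s} : N a <= r -> N b <= r -> 0 <= s <= 1 ->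
  N (a + s *: (b - a)) <= r.
Proof.
move=> Na Nb /andP[s0 s1].
have -> : a + s *: (b - a) = (1 - s) *: a + s *: b.
  by rewrite scalerBr scalerBl scale1r addrA addrAC.
apply: le_trans (is_normD _ _) _.
rewrite !is_normZ (ger0_norm s0) ger0_norm ?subr_ge0 //.
have : (1 - s) * N a <= (1 - s) * r by rewrite ler_wpM2l ?subr_ge0.
have : s * N b <= s * r by rewrite ler_wpM2l.
lra.
Qed.

End Norm.

Section Dot.
Context {R : realType}.

Lemma dotvE {n} (c x : 'rV[R]_n) : dotv c x = (c *m x^T) 0 0.
Proof. by rewrite mxE; apply: eq_bigr => i _; rewrite mxE. Qed.

Lemma dotvC {n} (c x : 'rV[R]_n) : dotv c x = dotv x c.
Proof. by apply: eq_bigr => i _; rewrite mulrC. Qed.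

Lemma dotvDr {n} (c x u : 'rV[R]_n) : dotv c (x + u) = dotv c x + dotv c u.
Proof. by rewrite !dotvE linearD mulmxDr mxE. Qed.

Lemma dotvZr {n} a (c x : 'rV[R]_n) : dotv c (a *: x) = a * dotv c x.
Proof. by rewrite !dotvE linearZ -scalemxAr mxE. Qed.

Lemma dotvBr {n} (c x u : 'rV[R]_n) : dotv c (x - u) = dotv c x - dotv c u.
Proof. by rewrite dotvDr -scaleN1r dotvZr mulN1r. Qed.

Lemma dotv0r {n} (c : 'rV[R]_n) : dotv c 0 = 0.
Proof. by rewrite -(scale0r 0) dotvZr mul0r. Qed.

Lemma dotv_mulmx {n m} (h : 'rV[R]_m) (x : 'rV[R]_n) (J : 'M[R]_(n, m)) :
  dotv h (x *m J) = dotv (h *m J^T) x.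
Proof. by rewrite !dotvE trmx_mul mulmxA. Qed.

Lemma dotvv_ge0 {n} (w : 'rV[R]_n) : 0 <= dotv w w.
Proof. by apply: sumr_ge0 => i _; rewrite -expr2 sqr_ge0. Qed.

Lemma dotvv_gt0 {n} {w : 'rV[R]_n} : w != 0 -> 0 < dotv w w.
Proof.
move=> w0; rewrite lt_neqAle dotvv_ge0 andbT eq_sym.
apply: contra w0 => /eqP ww0.
apply/eqP/rowP => i; rewrite mxE; apply/eqP; rewrite -sqrf_eq0 expr2.
apply/eqP/le_anti/andP; split; last by rewrite -expr2 sqr_ge0.
rewrite -ww0 /dotv (bigD1 i) //= lerDl.
by apply: sumr_ge0 => j _; rewrite -expr2 sqr_ge0.
Qed.

Lemma dotv_subZ {n} (w u : 'rV[R]_n) s :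
  dotv (w - s *: u) (w - s *: u) =
  dotv w w - s * (2 * dotv w u) + s ^+ 2 * dotv u u.
Proof.
rewrite dotvBr dotvZr (dotvC _ w) (dotvC _ u) !dotvBr !dotvZr (dotvC u w).
by ring.
Qed.

Lemma dotv_le0_of_minimal {n} (w u : 'rV[R]_n) :
  (forall s, 0 < s <= 1 -> dotv w w <= dotv (w - s *: u) (w - s *: u)) ->
  dotv w u <= 0.
Proof.
move=> wmin; rewrite leNgt; apply/negP => a0.
have b0 := dotvv_ge0 u.
set a := dotv w u in a0 *; set b := dotv u u in b0 *.
have ab0 : 0 < a + b by lra.
pose s := a / (a + b).
have s0 : 0 < s by rewrite divr_gt0.
have sab : s * (a + b) = a by rewrite mulfVK ?gt_eqF.
have s1 : s <= 1 by rewrite ler_pdivrMr // mul1r lerDl.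
have := wmin s; rewrite s0 s1 dotv_subZ -/a -/b => /(_ isT) le_sb.
have le_2a : 2 * a <= s * b.
  by rewrite -(ler_pM2l s0) [leRHS]mulrA -expr2; lra.
nra.
Qed.

Lemma dotvv_continuous {n} : continuous (fun w : 'rV[R]_n => dotv w w).
Proof.
apply: (@continuous_big _ _ +%R 0 xpredT add_continuous) => i _ w.
by apply: continuousM; exact: coord_continuous.
Qed.

End Dot.

Section DualNorm.
Context {R : realType} {n : nat} {N : 'rV[R]_n -> R}.
Hypothesis normN : is_norm N.

Let sphere_values c := [set dotv c x | x in [set x | N x = 1]].

Lemma dualnorm_has_ubound c : has_ubound (sphere_values c).
Proof.
have cD x y : `|dotv c (x + y)| <= `|dotv c x| + `|dotv c y|.
  by rewrite dotvDr ler_normD.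
have cZ a x : `|dotv c (a *: x)| = `|a| * `|dotv c x| by rewrite dotvZr normrM.
have [C C0 cC] := seminorm_le_mx_norm _ cD cZ.
have [k k0 kN] := mx_norm_le_is_norm normN.
exists (C / k) => _ [x /= Nx1 <-].
apply: le_trans (ler_norm _) (le_trans (cC x) _).
by rewrite ler_pdivlMr // -mulrA ler_piMr ?(ltW C0) // mulrC -Nx1.
Qed.

Lemma dotv_le_dualnorm c x : dotv c x <= dualnorm N c * N x.
Proof.
have [->|x0] := eqVneq x 0; first by rewrite dotv0r is_norm0 // mulr0.
have Nx0 : 0 < N x by exact: is_norm_gt0.
have unit_x : N ((N x)^-1 *: x) = 1.
  by rewrite is_normZ // normfV gtr0_norm // mulVf // gt_eqF.
have : dotv c ((N x)^-1 *: x) <= dualnorm N c.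
  apply: sup_upper_bound; last by exists ((N x)^-1 *: x).
  split; last exact: dualnorm_has_ubound.
  by exists (dotv c ((N x)^-1 *: x)), ((N x)^-1 *: x).
by rewrite dotvZr mulrC ler_pdivrMr.
Qed.

Lemma dualnorm_approx c e : 0 < e ->
  exists2 d, N d <= 1 & dualnorm N c - e < dotv c d.
Proof.
move=> e0; have [[v Sv]|S0] := pselect (sphere_values c !=set0).
  have c_sup : has_sup (sphere_values c).
    by split; [exists v | exact: dualnorm_has_ubound].
  have [_ [d /= Nd <-] ed] := sup_adherent e0 c_sup.
  by exists d; rewrite ?Nd.
(* The unit sphere is empty only when n = 0, and then [sup set0 = 0]. *)
exists 0; first by rewrite is_norm0.
rewrite dotv0r /dualnorm -/(sphere_values c) (_ : sphere_values c = set0).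
  by rewrite sup0 subr_lt0.
by apply/seteqP; split => // z Sz; apply: S0; exists z.
Qed.

End DualNorm.

Lemma mulmx_ball_projection {R : realType} {n m} {Nn : 'rV[R]_n -> R}
    (J : 'M[R]_(n, m)) (z : 'rV[R]_m) (r : R) :
  is_norm Nn -> 0 <= r ->
  exists2 d0, Nn d0 <= r &
    forall d, Nn d <= r -> dotv (z - d0 *m J) ((d - d0) *m J) <= 0.
Proof.
move=> normNn r0.
have mJ : continuous (fun d : 'rV[R]_n => d *m J) :=
  rV_linear_continuous (mulmxr J).
have dist_cont :
    continuous (fun d : 'rV[R]_n => dotv (z - d *m J) (z - d *m J)).
  move=> d; have res_cont : {for d, continuous (fun e => z - mulmxr J e)}.
    exact: cvgB (cvg_cst _) (mJ d).
  exact: continuous_comp res_cont (dotvv_continuous _).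
have ball0 : [set d | Nn d <= r] !=set0 by exists 0; rewrite /= is_norm0.
have [d0 /set_mem Nd0 d0min] := EVT_min_rV ball0 (compact_is_norm_ball normNn r)
  (continuous_subspaceT dist_cont).
exists d0 => // d Nd; apply: dotv_le0_of_minimal => s /andP[s0 s1].
have s01 : 0 <= s <= 1 by rewrite ltW.
have := d0min _ (mem_set (is_norm_ball_convex normNn Nd0 Nd s01)).
by rewrite /= mulmxDl -scalemxAl opprD addrA.
Qed.

Lemma mulmx_bounded_preimage {R : realType} {n m} {Nn : 'rV[R]_n -> R}
    {Nm : 'rV[R]_m -> R} {J : 'M[R]_(n, m)} {mu : R} :
  is_norm Nn -> is_norm Nm -> 0 < mu ->
  (forall h, mu * dualnorm Nm h <= dualnorm Nn (h *m J^T)) ->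
  forall z, exists2 d, d *m J = z & mu * Nn d <= Nm z.
Proof.
move=> normNn normNm mu0 adjJ z.
have [->|z0] := eqVneq z 0.
  by exists 0; rewrite ?mul0mx // !is_norm0 // mulr0.
pose r := Nm z / mu.
have r0 : 0 < r by rewrite divr_gt0 // is_norm_gt0.
have [d0 Nd0 normal_cone] := mulmx_ball_projection J z r normNn (ltW r0).
pose w := z - d0 *m J.
have [w0|w_neq0] := eqVneq w 0.
  exists d0; first by move/eqP: w0; rewrite subr_eq0 => /eqP.
  by rewrite mulrC -ler_pdivlMr.
(* Test the normal cone at [r *: d1], where [d1] nearly attains the dual norm
   of [w *m J^T]: this gives [r * ||w J^T||_* < <w, z>], while (B) and the
   duality inequality give [<w, z> <= r * mu * ||w||_* <= r * ||w J^T||_*]. *)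
have [d1 Nd1 d1_approx] :=
  dualnorm_approx normNn (w *m J^T) _ (divr_gt0 (dotvv_gt0 w_neq0) r0).
have := normal_cone (r *: d1).
rewrite is_normZ // gtr0_norm // ler_piMr ?(ltW r0) // => /(_ isT).
rewrite mulmxBl dotvBr -scalemxAl dotvZr dotv_mulmx subr_le0.
have -> : dotv w (d0 *m J) = dotv w z - dotv w w.
  by rewrite -dotvBr; congr dotv; rewrite /w opprB addrC subrK.
move=> cone.
have wz_le := dotv_le_dualnorm normNm w z.
have Nz : Nm z = r * mu by rewrite /r mulfVK ?gt_eqF.
have adj_r : r * (mu * dualnorm Nm w) <= r * dualnorm Nn (w *m J^T).
  by rewrite ler_pM2l.
have approx_r := d1_approx.
rewrite -(ltr_pM2l r0) mulrBr mulrCA divff ?gt_eqF // mulr1 in approx_r.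
rewrite Nz in wz_le; lra.
Qed.

Section Equation.
Context {R : realType} {n m : nat} {Nn : 'rV[R]_n -> R} {Nm : 'rV[R]_m -> R}.
Context {g : 'rV[R]_n -> 'rV[R]_m}.
Variable y : 'rV[R]_m.
Hypotheses (normNn : is_norm Nn) (normNm : is_norm Nm).

Lemma residual_newton_step {x d e} :
  differentiable g x -> 'd g x d = y - g x -> 0 < e ->
  \forall t \near 0^'+,
    Nm (g (x + t *: d) - y) <= (1 - t) * Nm (g x - y) + t * e.
Proof.
move=> dgx dgd e0; have [C C0 NmC] := is_norm_le_mx_norm normNm.
have quot : (fun t => t^-1 *: (g (t *: d + x) - g x)) @ 0^'+ --> y - g x.
  by apply: cvg_dnbhs_at_right; rewrite -dgd -deriveE //; exact: diff_derivable.
near=> t.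
have t0 : 0 < t by near: t; exact: nbhs_right_gt.
have t1 : t <= 1 by near: t; exact: nbhs_right_le.
have quot_close : Nm (t^-1 *: (g (t *: d + x) - g x) - (y - g x)) <= e.
  apply: le_trans (NmC _) _; rewrite distrC -ler_pdivlMl //; apply: ltW.
  by near: t; apply: cvgr_dist_lt quot _ _; rewrite mulr_gt0 ?invr_gt0.
set q := t^-1 *: _ in quot_close.
have -> : g (x + t *: d) - y = (1 - t) *: (g x - y) + t *: (q - (y - g x)).
  rewrite /q [t *: (_ - _)]scalerBr scalerA mulfV ?gt_eqF // scale1r.
  rewrite -[y - g x]opprB scalerN opprK scalerBl scale1r addrACA addNr addr0.
  by rewrite addrC [x + _]addrC addrA subrK.
apply: le_trans (is_normD normNm _ _) _.
rewrite !is_normZ // ger0_norm ?subr_ge0 // gtr0_norm //.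
by rewrite lerD2l; apply: ler_wpM2l => //; exact: ltW.
Unshelve. all: by end_near. Qed.

Context {rho mu : R}.
Hypotheses (mu0 : 0 < mu) (g0 : g 0 = 0)
  (g_diff : forall x, Nn x <= rho -> differentiable g x)
  (g_adj : forall x h, Nn x <= rho ->
     mu * dualnorm Nm h <= dualnorm Nn (h *m (jac g x)^T)).

Let B := [set x | Nn x <= rho].

Lemma residual_continuous (h : 'rV[R]_n -> R) : continuous h ->
  {within B, continuous (fun x => Nm (g x - y) + h x)}.
Proof.
move=> h_cont; apply: continuous_in_subspaceT => x /set_mem Bx.
apply: continuousD (h_cont x).
have res_cont : (fun x => g x - y) @ x --> g x - y.
  exact: cvgB (differentiable_continuous (g_diff _ Bx)) (cvg_cst _).
exact: cvg_comp _ _ res_cont (is_norm_continuous normNm _).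
Qed.

Lemma penalized_argmin_root c x : 0 <= c -> c < mu -> Nn x < rho ->
  (forall t, Nn t <= rho ->
     Nm (g x - y) + c * Nn x <= Nm (g t - y) + c * Nn t) ->
  g x = y.
Proof.
move=> c0 c_mu x_int x_min; have Bx := ltW x_int.
apply/eqP; rewrite -subr_eq0; apply: contraT => z_neq0.
set z := g x - y in z_neq0 x_min.
have Nz0 : 0 < Nm z := is_norm_gt0 normNm z_neq0.
have [d dz Nd] :=
  mulmx_bounded_preimage normNn normNm mu0 (fun h => g_adj x h Bx) (- z).
rewrite is_normN // in Nd.
have dgd : 'd g x d = y - g x by rewrite -[LHS]mul_rV_lin1 dz opprB.
have cNd : c * Nn d < Nm z by have := is_norm_ge0 normNn d; nra.
pose e := (Nm z - c * Nn d) / 2.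
have e0 : 0 < e by rewrite divr_gt0 // subr_gt0.
have step := residual_newton_step (g_diff _ Bx) dgd e0.
near (0 : R)^'+ => t.
have t0 : 0 < t by near: t; exact: nbhs_right_gt.
have Nxt : Nn (x + t *: d) <= Nn x + t * Nn d.
  by rewrite -[t in t * _]gtr0_norm // -is_normZ //; exact: is_normD.
have Bxt : Nn (x + t *: d) <= rho.
  apply: le_trans Nxt _; rewrite -lerBrDl.
  have : t <= (rho - Nn x) / (Nn d + 1).
    near: t; apply: nbhs_right_le.
    by rewrite divr_gt0 ?subr_gt0 ?ltr_wpDl ?is_norm_ge0.
  rewrite ler_pdivlMr ?ltr_wpDl ?is_norm_ge0 //.
  by have := is_norm_ge0 normNn d; nra.
have := x_min _ Bxt.
have : Nm (g (x + t *: d) - y) <= (1 - t) * Nm z + t * e.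
  by near: t; exact: step.
have : c * Nn (x + t *: d) <= c * (Nn x + t * Nn d) by rewrite ler_wpM2l.
rewrite /e; nra.
Unshelve. all: by end_near. Qed.

Lemma exists_solution_lt c : 0 < c -> c < mu -> Nm y < c * rho ->
  exists x, [/\ g x = y, Nn x <= rho & c * Nn x <= Nm y].
Proof.
move=> c0 c_mu y_lt.
have rho0 : 0 < rho.
  rewrite -(pmulr_rgt0 _ c0).
  exact: le_lt_trans (is_norm_ge0 normNm y) y_lt.
have cN_cont : continuous (fun x => c * Nn x).
  by move=> x; apply: cvgM (cvg_cst _) (is_norm_continuous normNn x).
have B0 : B 0 by rewrite /B /= is_norm0 // ltW.
have [xb /set_mem Bxb xb_min] := EVT_min_rV (ex_intro _ 0 B0)
  (compact_is_norm_ball normNn rho) (residual_continuous _ cN_cont).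
have cxb : c * Nn xb <= Nm y.
  have := xb_min 0 (mem_set B0).
  rewrite g0 sub0r is_normN // is_norm0 // mulr0 addr0.
  by have := is_norm_ge0 normNm (g xb - y); lra.
have xb_int : Nn xb < rho by rewrite -(ltr_pM2l c0) (le_lt_trans cxb).
exists xb; split => //.
apply: penalized_argmin_root (ltW c0) c_mu xb_int _ => t Bt.
exact: xb_min (mem_set Bt).
Qed.

Lemma exists_solution : Nm y < mu * rho ->
  exists x, g x = y /\ Nn x <= Nm y / mu.
Proof.
move=> y_lt.
have rho0 : 0 < rho.
  rewrite -(pmulr_rgt0 _ mu0).
  exact: le_lt_trans (is_norm_ge0 normNm y) y_lt.
pose excess x := Num.max 0 (mu * Nn x - Nm y).
have excess_cont : continuous excess.
  move=> x; apply: (@continuous_max _ _ (cst 0) (fun x => mu * Nn x - Nm y)).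
    exact: cst_continuous.
  exact: cvgB (cvgM (cvg_cst _) (is_norm_continuous normNn x)) (cvg_cst _).
have B0 : B !=set0 by exists 0; rewrite /B /= is_norm0 // ltW.
have [xs /set_mem Bxs xs_min] := EVT_min_rV B0 (compact_is_norm_ball normNn rho)
  (residual_continuous _ excess_cont).
pose G := Nm (g xs - y) + excess xs.
have res_ge0 := is_norm_ge0 normNm (g xs - y).
have excess_ge0 : 0 <= excess xs by rewrite le_max lexx.
suff G_le0 : G <= 0.
  rewrite /G in G_le0; exists xs; split.
    by apply/eqP; rewrite -subr_eq0; apply/eqP/(is_norm_eq0 normNm); lra.
  have : excess xs <= 0 by lra.
  by rewrite ge_max lexx subr_le0 ler_pdivlMr // mulrC.
rewrite leNgt; apply/negP => G_gt0.
have lo_mu : Num.max (Nm y / rho) (mu - G / rho) < mu.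
  by rewrite gt_max ltr_pdivrMr // y_lt /= gtrBl divr_gt0.
have [lo_c c_mu] := midf_lt lo_mu; set c := (_ + mu) / 2 in lo_c c_mu.
move: lo_c; rewrite gt_max => /andP[yc Gc].
have c0 : 0 < c by apply: le_lt_trans yc; rewrite divr_ge0 ?is_norm_ge0 ?ltW.
have y_c : Nm y < c * rho by rewrite -ltr_pdivrMr.
have [x [gx Bx cx]] := exists_solution_lt c c0 c_mu y_c.
have := xs_min x (mem_set Bx); rewrite gx subrr is_norm0 // add0r -/G.
apply/negP; rewrite -ltNge /excess gt_max G_gt0 /=.
have GrhoE : G / rho * rho = G by rewrite divfK ?gt_eqF.
have : (mu - c) * Nn x <= (mu - c) * rho by rewrite ler_wpM2l // subr_ge0 ltW.
nra.
Qed.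

End Equation.

Theorem theorem1 (R : realType) (n m : nat)
    (Nn : 'rV[R]_n -> R) (Nm : 'rV[R]_m -> R)
    (g : 'rV[R]_n -> 'rV[R]_m) (y : 'rV[R]_m) (rho L mu : R) :
  is_norm Nn -> is_norm Nm ->
  0 < rho -> 0 <= L -> 0 < mu ->
  (* (A) *)
  g 0 = 0 ->
  (forall x, Nn x <= rho -> differentiable g x) ->
  (forall xa xb, Nn xa <= rho -> Nn xb <= rho ->
     opnorm Nn Nm (jac g xa - jac g xb) <= L * Nn (xa - xb)) ->
  (* (B): || g'(x)^T h ||_* >= mu ||h||_*, with g'(x)^T h = h *m (jac g x)^T *)
  (forall x (h : 'rV[R]_m), Nn x <= rho ->
     mu * dualnorm Nm h <= dualnorm Nn (h *m (jac g x)^T)) ->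
  (* (C) *)
  Nm y < mu * rho ->
  exists xs : 'rV[R]_n, g xs = y /\ Nn xs <= Nm y / mu.
Proof.
move=> normNn normNm _ _ mu0 g0 g_diff _ g_adj.
exact: exists_solution.
Qed.
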